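(* Let $M=\{a,\bar a,b,\bar b\}^*$ be the free monoid on the four letters $a,\bar a,b,\bar b$, and let $F$ be the free group with free basis $\{a,\bar a,b,\bar b\}$. Equip $F$ with the profinite topology, and equip $M$ with the subspace topology induced by the natural embedding $M\hookrightarrow F$. Let $D_2^{'*}\subseteq M$ be the one-sided Dyck language and $D_2^*\subseteq M$ the two-sided Dyck language on the two pairs $\{a,\bar a\}$, $\{b,\bar b\}$. Then the closure of $D_2^{'*}$ in $M$ equals $D_2^*$.
   Context: The profinite topology on $F$ is the group topology in which the subgroups of finite index of $F$ form a basis of open neighborhoods of $1_F$. The one-sided (restricted) Dyck language $D_2^{'*}$ consists of the words $w\in M$ that can be reduced to the empty word by successively deleting subwords of the form $a\bar a$ or $b\bar b$ (i.e. $a,b$ are opening brackets and $\bar a,\bar b$ the corresponding closing brackets, and the word is correctly bracketed with each opening bracket preceding its closing bracket). The two-sided (unrestricted) Dyck language $D_2^*$ consists of the words $w\in M$ that can be reduced to the empty word by successively deleting subwords of the form $a\bar a$, $\bar a a$, $b\bar b$, or $\bar b b$. *)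

From HB Require Import structures.
From mathcomp Require Import all_boot.
From Stdlib Require Import Relation_Operators.

Set Implicit Arguments.
Unset Strict Implicit.
Unset Printing Implicit Defensive.

Inductive letter := La | Labar | Lb | Lbbar.

Definition letter_eqb (x y : letter) : bool :=
  match x, y with
  | La, La | Labar, Labar | Lb, Lb | Lbbar, Lbbar => true
  | _, _ => false
  end.
Lemma letter_eqP : Equality.axiom letter_eqb.
Proof. by case; case; constructor. Qed.
HB.instance Definition _ := hasDecEq.Build letter letter_eqP.

Definition M := seq letter.

(* Group words: a letter together with an exponent sign (true = inverse).
   An element of F is represented by any word; two words represent the same
   element of F iff they have the same free reduction. *)
Definition gletter := (letter * bool)%type.
Definition gword := seq gletter.

Definition ginvl (x : gletter) : gletter := (x.1, ~~ x.2).

Definition gpush (x : gletter) (s : gword) : gword :=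
  match s with
  | y :: s' => if y == ginvl x then s' else x :: s
  | [::] => [:: x]
  end.

Definition reduce (w : gword) : gword := foldr gpush [::] w.

Definition Feq (u v : gword) : Prop := reduce u = reduce v.

(* product in F is concatenation of representatives; inverse: *)
Definition ginv (u : gword) : gword := rev (map ginvl u).

Definition is_subgroup (H : gword -> Prop) : Prop :=
  [/\ (forall u v, Feq u v -> H u -> H v),
      H [::],
      (forall u v, H u -> H v -> H (u ++ v)) &
      (forall u, H u -> H (ginv u))].

Definition finite_index (H : gword -> Prop) : Prop :=
  exists gs : seq gword, forall x : gword, exists2 g, g \in gs & H (ginv g ++ x).

Definition embed (w : M) : gword := map (fun l => (l, false)) w.

(* In the profinite topology the cosets g H, with H a
   subgroup of finite index, form a basis of open neighbourhoods of g; so w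
   lies in the closure of X iff every such basic neighbourhood w H of w meets
   the image of X. *)
Definition in_profinite_closure (X : M -> Prop) (w : M) : Prop :=
  forall H, is_subgroup H -> finite_index H ->
    exists2 x, X x & H (ginv (embed w) ++ embed x).

Definition pair1 (x y : letter) : bool :=
  ((x == La) && (y == Labar)) || ((x == Lb) && (y == Lbbar)).
Definition pair2 (x y : letter) : bool := pair1 x y || pair1 y x.

Definition del_step (pr : letter -> letter -> bool) (u v : M) : Prop :=
  exists p q x y, [/\ pr x y, u = p ++ [:: x; y] ++ q & v = p ++ q].

Definition Dyck1 (w : M) : Prop := clos_refl_trans M (del_step pair1) w [::].
Definition Dyck2 (w : M) : Prop := clos_refl_trans M (del_step pair2) w [::].

(* If [H] has finite index with [n] cosets, then [y^(n!)] lies in the normal core of [H]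
   for every letter [y].  Hence a two-sided pair [abar a] can be replaced by the blocks
   [a^(n!) abar] and [a abar^(n!)] without changing the class modulo the core; doing this for
   every pair cancelled in a two-sided reduction of [w] produces a one-sided Dyck word in the
   coset [w H].
   Conversely, sending [abar] to [a^-1] and [bbar] to [b^-1] maps [M] into the free group on
   [a, b], kills every one-sided Dyck word, and sends a word [w] outside [D_2^*] to a nonempty
   reduced word [r].  Acting through this map on the positions of the path spelled by [r], the
   word [w] moves [0] to [size r], so the stabilizer of [0], a subgroup of finite index,
   separates [w] from [D_2'^*]. *)

From mathcomp Require Import all_boot all_fingroup zify.
From Stdlib Require Import Relation_Operators Classical ClassicalEpsilon.

Set Implicit Arguments.
Unset Strict Implicit.
Unset Printing Implicit Defensive.

Lemma ginvlK : involutive ginvl.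
Proof. by case=> l s; rewrite /ginvl /= negbK. Qed.

Lemma ginv_cat u v : ginv (u ++ v) = ginv v ++ ginv u.
Proof. by rewrite /ginv map_cat rev_cat. Qed.

Lemma ginvK : involutive ginv.
Proof. by move=> u; rewrite /ginv map_rev revK (mapK ginvlK). Qed.

Lemma ginv_cons x u : ginv (x :: u) = ginv u ++ [:: ginvl x].
Proof. by rewrite -cat1s ginv_cat. Qed.

Fixpoint reduced (s : gword) : bool :=
  if s is x :: ((y :: _) as s') then (y != ginvl x) && reduced s' else true.

Lemma reduced_behead x s : reduced (x :: s) -> reduced s.
Proof. by case: s => //= y s /andP[]. Qed.

Lemma reduced_gpush x s : reduced s -> reduced (gpush x s).
Proof.
case: s => [|y s] //= red_ys.
by case: ifP => [_|/negbT yx]; [exact: reduced_behead red_ys | rewrite /= yx].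
Qed.

Lemma reduced_reduce u : reduced (reduce u).
Proof. by elim: u => //= x u; apply: reduced_gpush. Qed.

Lemma reduced_nth x0 r i :
  reduced r -> i.+1 < size r -> nth x0 r i.+1 != ginvl (nth x0 r i).
Proof.
elim: r i => [|x r IH] i //=; case: r IH => [|y r] IH //= /andP[yx red_r].
by case: i => [|i] //= lt_i; apply: IH.
Qed.

Lemma gpushK x s : reduced s -> gpush x (gpush (ginvl x) s) = s.
Proof.
case: s => [|y s] /=; first by rewrite eqxx.
rewrite ginvlK; case: (eqVneq y x) => [->|yx] red_s; last by rewrite /= eqxx.
by case: s red_s => [|z s] //= /andP[/negbTE ->].
Qed.

Lemma reduce_cat u v : reduce (u ++ v) = foldr gpush (reduce v) u.
Proof. exact: foldr_cat. Qed.

Lemma reduce_cancel s q : reduce (s ++ ginv s ++ q) = reduce q.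
Proof.
elim: s q => //= x s IH q.
by rewrite ginv_cons -catA IH /= gpushK // reduced_reduce.
Qed.

Lemma Feq_catl p u v : Feq u v -> Feq (p ++ u) (p ++ v).
Proof. by rewrite /Feq !reduce_cat => ->. Qed.

Lemma Feq_cancel p s q : Feq (p ++ s ++ ginv s ++ q) (p ++ q).
Proof. by apply: Feq_catl; rewrite /Feq reduce_cancel. Qed.

Lemma Feq_cancelV p s q : Feq (p ++ ginv s ++ s ++ q) (p ++ q).
Proof. by have := Feq_cancel p (ginv s) q; rewrite ginvK. Qed.

Definition gpow (u : gword) k := flatten (nseq k u).

Lemma gpowD u m n : gpow u (m + n) = gpow u m ++ gpow u n.
Proof. by rewrite /gpow nseqD flatten_cat. Qed.

Lemma gpowM u m n : gpow u (m * n) = gpow (gpow u m) n.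
Proof. by elim: n => [|n IH]; rewrite ?muln0 // mulnS gpowD IH. Qed.

Lemma gpow_letter x n : gpow [:: x] n = nseq n x.
Proof. by elim: n => //= n IH; rewrite -IH. Qed.

Lemma Feq_gpow_conj g u n :
  Feq (gpow (ginv g ++ u ++ g) n) (ginv g ++ gpow u n ++ g).
Proof.
elim: n => [|n IH]; first by have := Feq_cancelV [::] g [::]; rewrite !cats0.
rewrite /Feq [gpow _ n.+1]/= (Feq_catl _ IH).
by have := Feq_cancel (ginv g ++ u) g (gpow u n ++ g); rewrite -!catA.
Qed.

Section Subgroup.
Variable H : gword -> Prop.
Hypothesis subH : is_subgroup H.

Lemma subgroup_Feq u v : Feq u v -> H u -> H v.
Proof. by case: subH => HF _ _ _; apply: HF. Qed.

Lemma subgroup1 : H [::].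
Proof. by case: subH. Qed.

Lemma subgroupM u v : H u -> H v -> H (u ++ v).
Proof. by case: subH => _ _ HM _; apply: HM. Qed.

Lemma subgroupV u : H u -> H (ginv u).
Proof. by case: subH => _ _ _ HV; apply: HV. Qed.

Lemma subgroup_gpow u n : H u -> H (gpow u n).
Proof. by move=> Hu; elim: n => [|n]; [apply: subgroup1 | apply: subgroupM]. Qed.

Lemma subgroup_coset g u v : H (ginv g ++ u) -> H (ginv g ++ v) -> H (ginv u ++ v).
Proof.
move=> Hu Hv; apply: subgroup_Feq (subgroupM (subgroupV Hu) Hv).
by rewrite ginv_cat ginvK -catA; apply: Feq_cancel.
Qed.

Definition core_eq u v := forall g, H (ginv g ++ ginv u ++ v ++ g).

Lemma core_eq_refl u : core_eq u u.
Proof.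
move=> g; apply: subgroup_Feq subgroup1.
rewrite /Feq (Feq_cancelV (ginv g) u g).
by have := Feq_cancelV [::] g [::]; rewrite cats0 => ->.
Qed.

Lemma core_eq_cat u v u' v' : core_eq u v -> core_eq u' v' -> core_eq (u ++ u') (v ++ v').
Proof.
move=> Euv Euv' g; apply: subgroup_Feq (subgroupM (Euv (u' ++ g)) (Euv' g)).
rewrite !ginv_cat -!catA /Feq.
have := Feq_cancel (ginv g ++ ginv u' ++ ginv u ++ v ++ u') g (ginv u' ++ v' ++ g).
rewrite -!catA => ->.
by have := Feq_cancel (ginv g ++ ginv u' ++ ginv u ++ v) u' (v' ++ g); rewrite -!catA.
Qed.

Section FiniteIndex.
Variable gs : seq gword.
Hypothesis cosets : forall x, exists2 g, g \in gs & H (ginv g ++ x).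

Lemma exists_period h : exists2 d, 0 < d <= size gs & H (gpow h d).
Proof.
pose n := size gs.
have [c Hc] : exists c : 'I_n.+1 -> 'I_n, forall i, H (ginv (nth [::] gs (c i)) ++ gpow h i).
  apply: (choice (fun (i : 'I_n.+1) (j : 'I_n) => H (ginv (nth [::] gs j) ++ gpow h i))).
  move=> i; have [g gs_g Hg] := cosets (gpow h i).
  have lt_g : index g gs < n by rewrite index_mem.
  by exists (Ordinal lt_g); rewrite /= nth_index.
have : ~~ injectiveb c by apply/injectiveP => /leq_card; rewrite !card_ord ltnn.
case/injectivePn => i [j neq_ij cij].
wlog lt_ij : i j neq_ij cij / i < j.
  move=> IH; case: (ltngtP i j) => [lt_ij|lt_ji|/val_inj eq_ij].
  - exact: (IH i j neq_ij cij lt_ij).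
  - by apply: (IH j i); rewrite 1?eq_sym.
  - by rewrite eq_ij eqxx in neq_ij.
exists (j - i); first by have := ltn_ord j; lia.
have Hj := Hc j; rewrite -cij in Hj.
have := subgroup_coset (Hc i) Hj.
have -> : gpow h j = gpow h i ++ gpow h (j - i) by rewrite -gpowD subnKC // ltnW.
by apply: subgroup_Feq; apply: (Feq_cancelV [::]).
Qed.

Lemma core_eq_nseq y : core_eq [::] (embed (nseq (size gs)`! y)).
Proof.
move=> g; set m := (size gs)`!.
have [d /andP[d_gt0 le_d] Hd] := exists_period (ginv g ++ [:: (y, false)] ++ g).
have -> : m = d * (m %/ d) by rewrite mulnC divnK // dvdn_fact ?d_gt0.
have := subgroup_gpow (m %/ d) Hd; rewrite -gpowM; apply: subgroup_Feq.
by rewrite /Feq Feq_gpow_conj gpow_letter /embed map_nseq.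
Qed.

End FiniteIndex.
End Subgroup.

Lemma embed_cat u v : embed (u ++ v) = embed u ++ embed v.
Proof. exact: map_cat. Qed.

Lemma del_rt_context pr p q u v :
  clos_refl_trans M (del_step pr) u v ->
  clos_refl_trans M (del_step pr) (p ++ u ++ q) (p ++ v ++ q).
Proof.
elim=> [u' v' [p' [q' [x [y [pr_xy -> ->]]]]] | u' | u' v' w' _ IHuv _ IHvw].
- by apply: rt_step; exists (p ++ p'), (q' ++ q), x, y; rewrite -!catA.
- exact: rt_refl.
- exact: rt_trans IHuv IHvw.
Qed.

Lemma del_rt_cons pr l u v :
  clos_refl_trans M (del_step pr) u v -> clos_refl_trans M (del_step pr) (l :: u) (l :: v).
Proof. by move=> Duv; have := del_rt_context [:: l] [::] Duv; rewrite !cats0. Qed.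

Lemma Dyck1_insert p u q : Dyck1 (p ++ q) -> Dyck1 u -> Dyck1 (p ++ u ++ q).
Proof. by move=> D1pq D1u; apply: rt_trans (del_rt_context p q D1u) D1pq. Qed.

Lemma Dyck1_pair x y : pair1 x y -> Dyck1 [:: x; y].
Proof. by move=> pr_xy; apply: rt_step; exists [::], [::], x, y. Qed.

Lemma Dyck1_nest n x y u : pair1 x y -> Dyck1 u -> Dyck1 (nseq n x ++ u ++ nseq n y).
Proof.
move=> pr_xy D1u; elim: n => [|n IH]; first by rewrite cats0.
have -> : nseq n.+1 x ++ u ++ nseq n.+1 y = [:: x] ++ (nseq n x ++ u ++ nseq n y) ++ [:: y].
  by rewrite -!catA -(nseqD n 1) addn1.
by apply: Dyck1_insert => //; apply: Dyck1_pair.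
Qed.

Section DyckInClosure.
Variable H : gword -> Prop.
Hypothesis subH : is_subgroup H.
Variable gs : seq gword.
Hypothesis cosets : forall x, exists2 g, g \in gs & H (ginv g ++ x).

Lemma pair2_blocks x y : pair2 x y -> exists bx by_,
  [/\ Dyck1 (bx ++ by_), core_eq H (embed [:: x]) (embed bx)
     & core_eq H (embed [:: y]) (embed by_)].
Proof.
case/orP => pr.
  by exists [:: x], [:: y]; split; [apply: Dyck1_pair | apply: core_eq_refl..].
set m := (size gs)`!.
exists (nseq m y ++ [:: x]), (y :: nseq m x); split.
- have [m' ->] : exists m', m = m'.+1 by exists m.-1; rewrite prednK // fact_gt0.
  have -> : (nseq m'.+1 y ++ [:: x]) ++ y :: nseq m'.+1 x
            = nseq m' y ++ [:: y; x; y; x] ++ nseq m' x.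
    by rewrite -{1}addn1 nseqD -!catA.
  have D1yx := Dyck1_pair pr.
  by apply: Dyck1_nest => //; exact: (@Dyck1_insert [::] [:: y; x] [:: y; x] D1yx D1yx).
- rewrite embed_cat.
  exact: (core_eq_cat subH (core_eq_nseq subH cosets y) (core_eq_refl subH _)).
- rewrite -cat1s embed_cat -[embed [:: y]]cats0.
  exact: (core_eq_cat subH (core_eq_refl subH _) (core_eq_nseq subH cosets x)).
Qed.

Definition Dyck1_blocks (w : M) := exists ws : seq (letter * M),
  [/\ map fst ws = w, Dyck1 (flatten (map snd ws)) &
      {in ws, forall z, core_eq H (embed [:: z.1]) (embed z.2)}].

Lemma Dyck1_blocks_del u v : del_step pair2 u v -> Dyck1_blocks v -> Dyck1_blocks u.
Proof.
case=> p [q [x [y [pr_xy -> ->]]]] [ws [ws_pq D1ws Ews]].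
have [bx [by_ [D1b Ex Ey]]] := pair2_blocks pr_xy.
exists (take (size p) ws ++ (x, bx) :: (y, by_) :: drop (size p) ws); split.
- by rewrite map_cat /= map_take map_drop ws_pq take_size_cat // drop_size_cat.
- rewrite map_cat flatten_cat /= [bx ++ _]catA; apply: Dyck1_insert => //.
  by rewrite -flatten_cat -map_cat cat_take_drop.
- move=> z; rewrite mem_cat !inE => /orP[/mem_take|/or3P[/eqP->|/eqP->|/mem_drop]] //;
  exact: Ews.
Qed.

Lemma Dyck1_blocks_Dyck2 w : Dyck2 w -> Dyck1_blocks w.
Proof.
move=> D2w; have : Dyck1_blocks [::] by exists [::]; split => //; apply: rt_refl.
elim: D2w => [u v /Dyck1_blocks_del //|//|u v w' _ IHuv _ IHvw /IHvw /IHuv //].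
Qed.

Lemma core_eq_blocks ws : {in ws, forall z, core_eq H (embed [:: z.1]) (embed z.2)} ->
  core_eq H (embed (map fst ws)) (embed (flatten (map snd ws))).
Proof.
elim: ws => [|z ws IH] Ews; first exact: core_eq_refl.
rewrite /= -cat1s !embed_cat; apply: core_eq_cat => //.
  by apply: Ews; rewrite mem_head.
by apply: IH => z' ws_z'; apply: Ews; rewrite inE ws_z' orbT.
Qed.

End DyckInClosure.

Lemma Dyck2_sub_closure w : Dyck2 w -> in_profinite_closure Dyck1 w.
Proof.
move=> D2w H subH [gs cosets].
have [ws [<- D1ws Ews]] := Dyck1_blocks_Dyck2 subH cosets D2w.
exists (flatten (map snd ws)) => //.
by have := core_eq_blocks subH Ews [::]; rewrite cats0.
Qed.

Local Open Scope group_scope.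

Section WordAction.
Variables (T : finType) (P : gletter -> {perm T}).
Hypothesis PV : forall x, P (ginvl x) = (P x)^-1.

Definition gprod (u : gword) : {perm T} := foldr (fun x s => P x * s) 1 u.

Lemma gprod_cat u v : gprod (u ++ v) = gprod u * gprod v.
Proof. by elim: u => [|x u IH] /=; rewrite ?mul1g // IH mulgA. Qed.

Lemma gprod_ginv u : gprod (ginv u) = (gprod u)^-1.
Proof.
elim: u => [|x u IH]; first by rewrite invg1.
by rewrite ginv_cons gprod_cat IH /= PV mulg1 invgM.
Qed.

Lemma gprod_gpush x s : gprod (gpush x s) = P x * gprod s.
Proof. by case: s => [|y s] //=; case: eqP => [->|_] //; rewrite PV mulgA mulgV mul1g. Qed.

Lemma gprod_reduce u : gprod (reduce u) = gprod u.
Proof. by elim: u => //= x u IH; rewrite gprod_gpush IH. Qed.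

Lemma gprod_del_rt (pr : letter -> letter -> bool) u v :
  (forall x y, pr x y -> P (x, false) * P (y, false) = 1) ->
  clos_refl_trans M (del_step pr) u v -> gprod (embed u) = gprod (embed v).
Proof.
move=> Ppr; elim=> [u' v' [p [q [x [y [pr_xy -> ->]]]]] | // | u' v' w' _ -> _ -> //].
by rewrite !embed_cat !gprod_cat /= mulg1 Ppr // mul1g.
Qed.

Variable t0 : T.

Definition stabilizer u := gprod u t0 = t0.

Lemma stabilizer_subgroup : is_subgroup stabilizer.
Proof.
split=> [u v Fuv | | u v | u]; rewrite /stabilizer.
- by rewrite -(gprod_reduce u) Fuv gprod_reduce.
- exact: perm1.
- by rewrite gprod_cat permM => -> ->.
- by rewrite gprod_ginv => fix_u; rewrite -{1}fix_u permK.
Qed.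

(* The coset of [x] is determined by the point [(gprod x)^-1 t0]. *)
Lemma stabilizer_finite_index : finite_index stabilizer.
Proof.
have [rep Hrep] : exists rep : T -> gword,
    forall t, (exists g, (gprod g)^-1 t0 = t) -> (gprod (rep t))^-1 t0 = t.
  apply: (choice (fun t g => (exists g', (gprod g')^-1 t0 = t) -> (gprod g)^-1 t0 = t)).
  move=> t; case: (classic (exists g, (gprod g)^-1 t0 = t)) => [[g Hg] | no_g].
    by exists g.
  by exists [::] => /no_g.
exists (map rep (enum T)) => x; exists (rep ((gprod x)^-1 t0)).
  by rewrite map_f ?mem_enum.
by rewrite /stabilizer gprod_cat gprod_ginv permM Hrep ?permKV //; exists x.
Qed.

End WordAction.

Lemma gprod_map (T : finType) (P : gletter -> {perm T}) f u :
  gprod (fun x => P (f x)) u = gprod P (map f u).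
Proof. by elim: u => //= x u ->. Qed.

Section PermExtension.
Variables (T : finType) (f : T -> T).

(* Composing with the transposition moves the image of [d] to [f d]; by injectivity of [f]
   on [l], this does not disturb the values already fixed on the rest of the list. *)
Fixpoint perm_ext (l : seq T) : {perm T} :=
  if l is d :: l' then perm_ext l' * tperm (perm_ext l' d) (f d) else 1.

Lemma perm_extE l : uniq l -> {in l &, injective f} -> {in l, perm_ext l =1 f}.
Proof.
elim: l => [|d l IH] //= /andP[d_l uniq_l] inj_f p.
have inj_f' : {in l &, injective f}.
  by move=> a b la lb; apply: inj_f; rewrite inE ?la ?lb orbT.
rewrite inE permM; case: (eqVneq p d) => [-> _|neq_pd /= lp]; first by rewrite tpermL.
have ext_p := IH uniq_l inj_f' p lp.
have [dl pl] : d \in d :: l /\ p \in d :: l by rewrite !inE eqxx lp orbT.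
rewrite ext_p tpermD //; apply: contra_neq neq_pd.
  by rewrite -ext_p => /perm_inj ->.
by move=> /(inj_f _ _ dl pl) ->.
Qed.

End PermExtension.

Definition unbar (l : letter) : gletter :=
  match l with
  | La => (La, false) | Labar => (La, true)
  | Lb => (Lb, false) | Lbbar => (Lb, true)
  end.

Definition unbar_gletter (x : gletter) : gletter := ((unbar x.1).1, (unbar x.1).2 (+) x.2).

Lemma unbar_gletterV x : unbar_gletter (ginvl x) = ginvl (unbar_gletter x).
Proof. by case: x => l s; rewrite /unbar_gletter /ginvl /= addbN. Qed.

Lemma unbar_pair1 x y : pair1 x y -> unbar_gletter (y, false) = ginvl (unbar_gletter (x, false)).
Proof. by case: x; case: y. Qed.

Lemma map_unbar_embed w : map unbar_gletter (embed w) = map unbar w.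
Proof. by elim: w => //= l w ->; case: l. Qed.

Lemma del_rt_reduce_unbar w :
  exists2 w', clos_refl_trans M (del_step pair2) w w' & map unbar w' = reduce (map unbar w).
Proof.
elim: w => [|l w [w' Dw eq_w']]; first by exists [::]; first exact: rt_refl.
have -> : reduce (map unbar (l :: w)) = gpush (unbar l) (map unbar w') by rewrite eq_w'.
case: w' Dw {eq_w'} => [|l' w'] Dw /=; first by exists [:: l]; first exact: del_rt_cons.
case: ifP => [cancel_ll'|_]; last by exists [:: l, l' & w']; first exact: del_rt_cons.
exists w' => //; apply: rt_trans (del_rt_cons l Dw) _; apply: rt_step.
by exists [::], w', l, l'; split => //; move: cancel_ll'; case: (l); case: (l').
Qed.

Lemma Dyck2_reduce_unbar w : reduce (map unbar w) = [::] -> Dyck2 w.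
Proof. by have [[|l w'] Dw] := del_rt_reduce_unbar w => <-. Qed.

(* Free groups are residually finite: a nonempty reduced word [r] acts on the positions
   [0..size r] of its own path, each letter moving along the edges of the path labelled by it. *)
Section PathAction.
Variable r : gword.
Hypothesis reduced_r : reduced r.
Local Notation k := (size r).
Local Notation T := 'I_k.+1.
Local Notation "r_[ i ]" := (nth (La, false) r i) (format "r_[ i ]").

Definition edge_fwd l (p : nat) := (p < k) && (r_[p] == (l, false)).
Definition edge_bwd l (p : nat) := (0 < p) && (r_[p.-1] == (l, true)).

Definition path_step l (p : T) : T := inord (if edge_fwd l p then p.+1 else p.-1).

Definition path_dom l : seq T := [seq p : T <- enum T | edge_fwd l p || edge_bwd l p].

Lemma path_stepE l (p : T) : path_step l p = (if edge_fwd l p then p.+1 else p.-1) :> nat.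
Proof. by rewrite inordK //; case: ifP => [/andP[]//|_]; have := ltn_ord p; lia. Qed.

Lemma edge_fwd_bwd l p (q : T) : edge_fwd l p -> edge_bwd l q -> q.-1 != p.+1.
Proof.
case/andP=> _ /eqP rp /andP[q_gt0 /eqP rq]; apply/eqP => eq_qp.
have lt_pk : p.+1 < k by have := ltn_ord q; lia.
by have := reduced_nth (La, false) reduced_r lt_pk; rewrite -eq_qp rq rp eqxx.
Qed.

Lemma path_step_inj l : {in path_dom l &, injective (path_step l)}.
Proof.
move=> p q; rewrite !mem_filter => /andP[dom_p _] /andP[dom_q _] /(congr1 val).
rewrite /= !path_stepE => eq_pq; apply: val_inj => /=.
case: (boolP (edge_fwd l p)) dom_p eq_pq => fwd_p /= dom_p;
  case: (boolP (edge_fwd l q)) dom_q => fwd_q /= dom_q eq_pq.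
- lia.
- by case/eqP: (edge_fwd_bwd fwd_p dom_q).
- by case/eqP: (edge_fwd_bwd fwd_q dom_p).
- by move: dom_p dom_q => /andP[p_gt0 _] /andP[q_gt0 _]; lia.
Qed.

Definition path_perm l : {perm T} := perm_ext (path_step l) (path_dom l).

Lemma path_permE l (p : T) : edge_fwd l p || edge_bwd l p -> path_perm l p = path_step l p.
Proof.
move=> dom_p; apply: perm_extE; first exact/filter_uniq/enum_uniq.
  exact: path_step_inj.
by rewrite mem_filter dom_p mem_enum.
Qed.

Definition path_rep (x : gletter) : {perm T} :=
  if x.2 then (path_perm x.1)^-1 else path_perm x.1.

Lemma path_repV x : path_rep (ginvl x) = (path_rep x)^-1.
Proof. by case: x => l [] /=; rewrite /path_rep /= ?invgK. Qed.

Lemma path_rep_nth i : i < k -> path_rep r_[i] (inord i) = inord i.+1.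
Proof.
move=> lt_ik; rewrite /path_rep; case rl: r_[i] => [l []] /=.
- have bwd_i1 : edge_bwd l (inord i.+1 : T) by rewrite /edge_bwd inordK //= rl eqxx.
  have fwd_i1 : edge_fwd l (inord i.+1 : T) = false.
    rewrite /edge_fwd inordK //; apply/andP => -[lt_i1 /eqP ri1].
    by have := reduced_nth (La, false) reduced_r lt_i1; rewrite ri1 rl eqxx.
  have step : path_perm l (inord i.+1) = inord i.
    rewrite path_permE ?bwd_i1 ?orbT //; apply: val_inj.
    by rewrite /= path_stepE fwd_i1 !inordK //; lia.
  by rewrite -step permK.
- have fwd_i : edge_fwd l (inord i : T) by rewrite /edge_fwd inordK ?lt_ik ?rl ?eqxx //; lia.
  by rewrite path_permE ?fwd_i //; apply: val_inj; rewrite /= path_stepE fwd_i !inordK //; lia.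
Qed.

Lemma gprod_path_rep_take i : i <= k -> gprod path_rep (take i r) ord0 = inord i.
Proof.
elim: i => [|i IH] le_ik; first by apply: val_inj; rewrite take0 perm1 /= inordK.
rewrite (take_nth (La, false)) // -cats1 gprod_cat permM IH 1?ltnW //=.
by rewrite mulg1 path_rep_nth.
Qed.

Lemma gprod_path_rep : gprod path_rep r ord0 = ord_max.
Proof.
have := gprod_path_rep_take (leqnn k); rewrite take_size => ->.
by apply: val_inj; rewrite /= inordK.
Qed.

End PathAction.

Lemma closure_sub_Dyck2 w : in_profinite_closure Dyck1 w -> Dyck2 w.
Proof.
move=> cl_w; apply: NNPP => /(contra_not (@Dyck2_reduce_unbar w)).
set r := reduce (map unbar w) => r_nil.
pose rho x := path_rep r (unbar_gletter x).
have rhoV x : rho (ginvl x) = (rho x)^-1 by rewrite /rho unbar_gletterV path_repV.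
have [x D1x Hx] := cl_w _ (stabilizer_subgroup rhoV ord0) (stabilizer_finite_index rhoV ord0).
have rho_x : gprod rho (embed x) = 1.
  apply: (gprod_del_rt _ D1x) => a b /unbar_pair1 eq_ab.
  by rewrite /rho eq_ab path_repV mulgV.
have rho_w : gprod rho (embed w) = gprod (path_rep r) r.
  by rewrite gprod_map map_unbar_embed (gprod_reduce (@path_repV r)).
move: Hx; rewrite /stabilizer gprod_cat gprod_ginv // rho_x mulg1 rho_w => fix0.
have : gprod (path_rep r) r ord0 = ord0 by rewrite -{1}fix0 permKV.
rewrite gprod_path_rep ?reduced_reduce // => /(congr1 val) /= /size0nil.
exact: r_nil.
Qed.

Theorem theorem1 :
  forall w : M, in_profinite_closure Dyck1 w <-> Dyck2 w.
Proof. by move=> w; split; [apply: closure_sub_Dyck2 | apply: Dyck2_sub_closure]. Qed.
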